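(* Let $n \ge 1$, let $Q \ge 0$, let $\alpha \ge 0$, and let $q_1,\dots,q_n \ge 0$ be demands. Let $d_{i,i+1}$ ($1 \le i \le n-1$), $d_{0,i}$ and $d_{i,0}$ ($1 \le i \le n$) be real numbers. For $1 \le i \le n$ put $D[i] = \sum_{k=1}^{i-1} d_{k,k+1}$ and $Q[i] = \sum_{k=1}^{i} q_k$, with $Q[0]=0$. Let $\mathcal{G}$ be the directed acyclic graph with vertex set $\{0,1,\dots,n\}$ and an arc $(i,j)$ for every $0 \le i<j \le n$, with cost $$c(i,j) = d_{0,i+1} + D[j] - D[i+1] + d_{j,0} + \alpha \max\{Q[j]-Q[i]-Q,\,0\}.$$ Then there is an algorithm that computes a minimum-cost path from $0$ to $n$ in $\mathcal{G}$ (together with its cost) in $\mathcal{O}(n)$ time.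
   Context: This is the ''Split'' problem with soft capacity constraints for the vehicle routing problem: customers $1,\dots,n$ are given in a fixed order (a ''giant tour''), $d_{0,i}$ and $d_{i,0}$ are the distances from the depot to customer $i$ and back, $d_{i,i+1}$ is the distance between consecutive customers, and an arc $(i,j)$ represents a route leaving the depot, visiting customers $i+1,\dots,j$ in order and returning to the depot; exceeding the vehicle capacity $Q$ is allowed but penalized linearly with coefficient $\alpha$. Running time is measured in the model where arithmetic operations and comparisons on reals take constant time. *)

From Stdlib Require Import Reals List Arith Lia.
Import ListNotations.
Open Scope R_scope.

(* Customers are 1..n.  Input functions (only values on the relevant  *)
(* index ranges matter):                                              *)
(*   dn i   = d_{i,i+1}    (1 <= i <= n-1)                            *)
(*   dout i = d_{0,i}      (1 <= i <= n)                              *)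
(*   din i  = d_{i,0}      (1 <= i <= n)                              *)

Fixpoint sum_upto (f : nat -> R) (m : nat) : R :=
  match m with
  | O => 0
  | S m' => sum_upto f m' + f (S m')
  end.

Definition Dpre (dn : nat -> R) (i : nat) : R := sum_upto dn (i - 1).

Definition Qpre (q : nat -> R) (i : nat) : R := sum_upto q i.

Definition arc_cost (Qcap alpha : R) (q dn dout din : nat -> R) (i j : nat) : R :=
  dout (S i) + Dpre dn j - Dpre dn (S i) + din j
  + alpha * Rmax (Qpre q j - Qpre q i - Qcap) 0.

Fixpoint incr (s : list nat) : Prop :=
  match s with
  | x :: ((y :: _) as t) => (x < y)%nat /\ incr t
  | _ => True
  end.

Definition is_path (n : nat) (s : list nat) : Prop :=
  hd 1%nat s = 0%nat /\ last s 0%nat = n /\ s <> [] /\ incr s.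

Fixpoint path_cost (c : nat -> nat -> R) (s : list nat) : R :=
  match s with
  | x :: ((y :: _) as t) => c x y + path_cost c t
  | _ => 0
  end.

(* Real-RAM model of computation.                                     *)
(* Every instruction costs one time unit.  Arithmetic (+,-,* ) and    *)
(* comparisons on reals take constant time; there is no conversion    *)
(* from reals to integers (no floor).                                 *)
Inductive instr : Type :=
| RConst (d : nat) (z : Z)
| RAdd (d a b : nat)
| RSub (d a b : nat)
| RMul (d a b : nat)
| RLoad (d p : nat)
| RStore (p s : nat)
| RJle (a b l : nat)
| NConst (d k : nat)
| NAdd (d a b : nat)
| NSub (d a b : nat)
| NLoad (d p : nat)
| NStore (p s : nat)
| NJle (a b l : nat)
| Jmp (l : nat)
| Halt.

Record config : Type := Config { pc : nat; rm : nat -> R; nm : nat -> nat }.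

Definition updR (m : nat -> R) (a : nat) (v : R) : nat -> R :=
  fun x => if Nat.eqb x a then v else m x.
Definition updN (m : nat -> nat) (a : nat) (v : nat) : nat -> nat :=
  fun x => if Nat.eqb x a then v else m x.

Definition step (prog : list instr) (c : config) : option config :=
  let '(Config k r m) := c in
  let next := S k in
  match nth k prog Halt with
  | RConst d z => Some (Config next (updR r d (IZR z)) m)
  | RAdd d a b => Some (Config next (updR r d (r a + r b)) m)
  | RSub d a b => Some (Config next (updR r d (r a - r b)) m)
  | RMul d a b => Some (Config next (updR r d (r a * r b)) m)
  | RLoad d p => Some (Config next (updR r d (r (m p))) m)
  | RStore p s => Some (Config next (updR r (m p) (r s)) m)
  | RJle a b l =>
      Some (Config (if Rle_dec (r a) (r b) then l else next) r m)
  | NConst d x => Some (Config next r (updN m d x))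
  | NAdd d a b => Some (Config next r (updN m d (m a + m b)%nat))
  | NSub d a b => Some (Config next r (updN m d (m a - m b)%nat))
  | NLoad d p => Some (Config next r (updN m d (m (m p))))
  | NStore p s => Some (Config next r (updN m (m p) (m s)))
  | NJle a b l => Some (Config (if Nat.leb (m a) (m b) then l else next) r m)
  | Jmp l => Some (Config l r m)
  | Halt => None
  end.

Fixpoint exec (prog : list instr) (t : nat) (c : config) : config :=
  match t with
  | O => c
  | S t' => match step prog c with
            | None => c
            | Some c' => exec prog t' c'
            end
  end.

(* Input encoding: rm[0] = Q, rm[1] = alpha, and for 1 <= i <= n:
   rm[5i] = q_i, rm[5i+1] = d_{i,i+1} (0 if i = n), rm[5i+2] = d_{0,i},
   rm[5i+3] = d_{i,0}; all other real cells 0.  nm[0] = n, others 0. *)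
Definition input_rm (n : nat) (Qcap alpha : R) (q dn dout din : nat -> R)
  : nat -> R :=
  fun a =>
    if Nat.eqb a 0 then Qcap
    else if Nat.eqb a 1 then alpha
    else let i := Nat.div a 5 in
         if andb (Nat.leb 1 i) (Nat.leb i n) then
           match Nat.modulo a 5 with
           | 0 => q i
           | 1 => if Nat.ltb i n then dn i else 0
           | 2 => dout i
           | 3 => din i
           | _ => 0
           end
         else 0.

Definition input_nm (n : nat) : nat -> nat :=
  fun a => if Nat.eqb a 0 then n else 0%nat.

Definition init_config (n : nat) (Qcap alpha : R) (q dn dout din : nat -> R)
  : config := Config 0 (input_rm n Qcap alpha q dn dout din) (input_nm n).

(* Output convention: nm[1] = k (number of arcs), nm[2], ..., nm[k+2]
   are the path vertices p_0, ..., p_k, and rm[0] is the path's cost. *)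
Definition out_path (c : config) : list nat :=
  map (fun i => nm c (2 + i)) (seq 0 (S (nm c 1))).
Definition out_cost (c : config) : R := rm c 0.

From Stdlib Require Import Reals List Arith Lia Lra.
Import ListNotations.
Open Scope R_scope.

(* With T j := q_{j+1} + ... + q_n and E j := d_{j,j+1} + ... + d_{n-1,n} the
   arc cost splits as
     c(i,j) = (d_{0,i+1} + E (i+1)) + (d_{j,0} - E j) + alpha max(T i - T j - Q, 0),
   so the backward Bellman recursion reads
     S i = d_{0,i+1} + E (i+1) + min_{j>i} (U j + alpha max(T i - T j - Q, 0)),
     U j = d_{j,0} - E j + S j.
   T is nonincreasing, hence the j > i with zero penalty form a window
   i < j <= hi(i) whose right end decreases with i.  The window part of the
   minimum is a sliding-window minimum of U, kept in a monotone deque of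
   indices; for j > hi(i) the term is alpha (T i - Q) + (U j - alpha T j), and
   the minimum of U j - alpha T j over the growing set j > hi(i) is a running
   minimum.  Each index enters and leaves the deque and the window once, so
   the loop runs in linear time; the minimizing j is stored as the successor
   of i, and following successors from 0 outputs an optimal path. *)

Section Cost.
Variables (n : nat) (Qcap alpha : R) (q dn dout din : nat -> R).

Local Notation cost := (arc_cost Qcap alpha q dn dout din).

(* The input encoding stores 0 in place of the nonexistent d_{n,n+1}. *)
Definition dnext (k : nat) : R := if (k <? n)%nat then dn k else 0.

Fixpoint sum_from (f : nat -> R) (m k : nat) : R :=
  match k with O => 0 | S k' => f m + sum_from f (S m) k' end.

Definition load_after (m : nat) : R := sum_from q (S m) (n - m).
Definition dist_from (m : nat) : R := sum_from dnext m (S n - m).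

Lemma load_after_S m : (m < n)%nat -> load_after m = q (S m) + load_after (S m).
Proof. intros H. unfold load_after. replace (n - m)%nat with (S (n - S m)) by lia. reflexivity. Qed.

Lemma load_after_n : load_after n = 0.
Proof. unfold load_after. rewrite Nat.sub_diag. reflexivity. Qed.

Lemma dist_from_S m : (m <= n)%nat -> dist_from m = dnext m + dist_from (S m).
Proof. intros H. unfold dist_from. replace (S n - m)%nat with (S (S n - S m)) by lia. reflexivity. Qed.

Lemma dist_from_Sn : dist_from (S n) = 0.
Proof. unfold dist_from. rewrite Nat.sub_diag. reflexivity. Qed.

Lemma Qpre_add_load_after j : (j <= n)%nat -> Qpre q j + load_after j = Qpre q n.
Proof.
  intros Hj. remember (n - j)%nat as d eqn:Hd. revert j Hj Hd.
  induction d as [|d IH]; intros j Hj Hd.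
  - replace j with n by lia. rewrite load_after_n. ring.
  - rewrite load_after_S, <- (IH (S j)) by lia. unfold Qpre. simpl. ring.
Qed.

Lemma Dpre_add_dist_from j : (1 <= j <= n)%nat -> Dpre dn j + dist_from j = sum_upto dn (n - 1).
Proof.
  intros Hj. remember (n - j)%nat as d eqn:Hd. revert j Hj Hd.
  induction d as [|d IH]; intros j Hj Hd.
  - replace j with n by lia. rewrite dist_from_S, dist_from_Sn by lia.
    unfold dnext, Dpre. rewrite Nat.ltb_irrefl. ring.
  - rewrite dist_from_S, <- (IH (S j)) by lia.
    unfold dnext. replace (j <? n)%nat with true by (symmetry; apply Nat.ltb_lt; lia).
    unfold Dpre. replace (S j - 1)%nat with (S (j - 1)) by lia. simpl sum_upto.
    replace (S (j - 1)) with j by lia. ring.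
Qed.

Lemma arc_cost_split i j : (i < j <= n)%nat ->
  cost i j = dout (S i) + dist_from (S i) + (din j - dist_from j)
             + alpha * Rmax (load_after i - load_after j - Qcap) 0.
Proof.
  intros Hij. unfold arc_cost.
  pose proof (Qpre_add_load_after i ltac:(lia)). pose proof (Qpre_add_load_after j ltac:(lia)).
  pose proof (Dpre_add_dist_from (S i) ltac:(lia)). pose proof (Dpre_add_dist_from j ltac:(lia)).
  replace (Qpre q j - Qpre q i - Qcap) with (load_after i - load_after j - Qcap) by lra.
  lra.
Qed.

Lemma load_after_antitone j j' : (forall i, (1 <= i <= n)%nat -> 0 <= q i) ->
  (j <= j' <= n)%nat -> load_after j' <= load_after j.
Proof.
  intros Hq [Hjj' Hj']. induction Hjj' as [|j' Hjj' IH]; [lra|].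
  rewrite load_after_S in IH by lia. pose proof (Hq (S j') ltac:(lia)). specialize (IH ltac:(lia)). lra.
Qed.

Definition is_path_from (a : nat) (s : list nat) : Prop :=
  hd 1%nat s = a /\ last s 0%nat = n /\ s <> [] /\ incr s.

Definition path_lb (a : nat) (x : R) : Prop :=
  forall s, is_path_from a s -> x <= path_cost cost s.

Lemma incr_hd_le_last s a : incr (a :: s) -> (a <= last (a :: s) 0)%nat.
Proof.
  revert a. induction s as [|b s IH]; intros a H; simpl; auto.
  destruct H as [H1 H2]. specialize (IH b H2). simpl in IH. destruct s; lia.
Qed.

Lemma path_lb_n : path_lb n 0.
Proof.
  intros [|a s] [H1 [H2 [H3 H4]]]; [congruence|]. simpl in H1. subst a.
  destruct s as [|b s]; simpl; [lra|].
  destruct H4 as [H4 H5]. pose proof (incr_hd_le_last s b H5).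
  simpl in H2, H. destruct s; lia.
Qed.

Lemma path_lb_bellman i best (S U : nat -> R) : (i < n)%nat ->
  (forall j, (i < j <= n)%nat -> path_lb j (S j)) ->
  (forall j, (i < j <= n)%nat -> U j = din j - dist_from j + S j) ->
  (forall j, (i < j <= n)%nat ->
     best <= U j + alpha * Rmax (load_after i - load_after j - Qcap) 0) ->
  path_lb i (dout (Datatypes.S i) + dist_from (Datatypes.S i) + best).
Proof.
  intros Hi HS HU Hbest [|a s] [H1 [H2 [H3 H4]]]; [congruence|]. simpl in H1. subst a.
  destruct s as [|j s]; [simpl in H2; lia|].
  destruct H4 as [H4 H5]. pose proof (incr_hd_le_last s j H5) as Hl.
  assert (Hj : (last (j :: s) 0 = n)%nat) by (simpl in H2 |- *; destruct s; auto).
  change (path_cost cost (i :: j :: s)) with (cost i j + path_cost cost (j :: s)).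
  assert (HSj : S j <= path_cost cost (j :: s)).
  { apply HS; [lia|]. repeat split; auto; congruence. }
  rewrite arc_cost_split by lia. specialize (Hbest j ltac:(lia)). rewrite HU in Hbest by lia. lra.
Qed.

(* Successor pointers live in the integer memory at [succ_base + j]; [follow]
   is fuelled because the memory need not be consistent. *)
Definition succ_base := (n + 100)%nat.

Fixpoint follow (m : nat -> nat) (fuel c : nat) : list nat :=
  match fuel with
  | O => [c]
  | S f => if (c <? n)%nat then c :: follow m f (m (succ_base + c)%nat) else [c]
  end.

Definition succ_path (m : nat -> nat) (c : nat) : list nat := follow m n c.

Definition succ_ok (m : nat -> nat) (lo : nat) : Prop :=
  forall j, (lo <= j < n)%nat -> (j < m (succ_base + j) <= n)%nat.

Lemma follow_fuel_irrel m lo : succ_ok m lo -> forall f f' c, (lo <= c <= n)%nat ->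
  (n - c <= f)%nat -> (n - c <= f')%nat -> follow m f c = follow m f' c.
Proof.
  intros Hs f. induction f as [|f IH]; intros f' c Hc H1 H2.
  - replace c with n by lia. destruct f'; simpl; auto. rewrite Nat.ltb_irrefl. auto.
  - simpl. destruct (Nat.ltb_spec c n).
    + destruct f' as [|f']; [lia|]. simpl. rewrite (proj2 (Nat.ltb_lt c n)) by auto.
      f_equal. pose proof (Hs c ltac:(lia)). apply IH; lia.
    + destruct f'; simpl; auto. rewrite (proj2 (Nat.ltb_ge c n)) by auto. auto.
Qed.

Lemma succ_path_cons m lo c : succ_ok m lo -> (lo <= c < n)%nat ->
  succ_path m c = c :: succ_path m (m (succ_base + c)%nat).
Proof.
  intros Hs Hc. unfold succ_path.
  rewrite (follow_fuel_irrel m lo Hs n (S (n - 1)) c) by lia.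
  simpl. rewrite (proj2 (Nat.ltb_lt c n)) by lia. f_equal.
  pose proof (Hs c ltac:(lia)). apply (follow_fuel_irrel m lo Hs); lia.
Qed.

Lemma succ_path_n m : succ_path m n = [n].
Proof. unfold succ_path. generalize n at 1. intros [|f]; simpl; auto. rewrite Nat.ltb_irrefl. auto. Qed.

Lemma succ_path_hd m c : exists t, succ_path m c = c :: t.
Proof. unfold succ_path. generalize n at 1. intros [|f]; simpl; eauto. destruct (c <? n)%nat; eauto. Qed.

Lemma succ_path_ext m m' lo : succ_ok m lo ->
  (forall j, (lo <= j < n)%nat -> m' (succ_base + j)%nat = m (succ_base + j)%nat) ->
  forall c, (lo <= c <= n)%nat -> succ_path m' c = succ_path m c.
Proof.
  intros Hs He c Hc. unfold succ_path. generalize n at 1 2 as f. revert c Hc.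
  intros c Hc f. revert c Hc.
  induction f as [|f IH]; intros c Hc; simpl; auto.
  destruct (Nat.ltb_spec c n); auto. rewrite He by lia. f_equal.
  pose proof (Hs c ltac:(lia)). apply IH; lia.
Qed.

Lemma succ_path_is_path m lo : succ_ok m lo -> forall c, (lo <= c <= n)%nat ->
  is_path_from c (succ_path m c).
Proof.
  intros Hs c Hc. remember (n - c)%nat as d eqn:Hd. revert c Hc Hd.
  induction d as [d IH] using lt_wf_ind; intros c Hc Hd.
  destruct (Nat.eq_dec c n) as [->|Hcn].
  - rewrite succ_path_n. repeat split; simpl; auto; congruence.
  - rewrite (succ_path_cons m lo c Hs) by lia. pose proof (Hs c ltac:(lia)) as Hc'.
    destruct (IH (n - m (succ_base + c))%nat ltac:(lia) (m (succ_base + c)%nat) ltac:(lia) eq_refl)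
      as [A [B [C D]]].
    destruct (succ_path_hd m (m (succ_base + c)%nat)) as [t Ht]. rewrite Ht in *.
    repeat split; simpl; auto; try congruence; try (simpl in B; destruct t; auto); lia.
Qed.

Lemma succ_path_cost m lo c : succ_ok m lo -> (lo <= c < n)%nat ->
  path_cost cost (succ_path m c)
  = cost c (m (succ_base + c)%nat) + path_cost cost (succ_path m (m (succ_base + c)%nat)).
Proof.
  intros Hs Hc. rewrite (succ_path_cons m lo c Hs Hc).
  destruct (succ_path_hd m (m (succ_base + c)%nat)) as [t ->]. reflexivity.
Qed.

End Cost.

Lemma updR_eq r a v x : x = a -> updR r a v x = v.
Proof. intros ->. unfold updR. rewrite Nat.eqb_refl. auto. Qed.
Lemma updR_ne r a v x : x <> a -> updR r a v x = r x.
Proof. intros H. unfold updR. destruct (Nat.eqb_spec x a); congruence. Qed.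
Lemma updN_eq r a v x : x = a -> updN r a v x = v.
Proof. intros ->. unfold updN. rewrite Nat.eqb_refl. auto. Qed.
Lemma updN_ne r a v x : x <> a -> updN r a v x = r x.
Proof. intros H. unfold updN. destruct (Nat.eqb_spec x a); congruence. Qed.
Lemma input_nm_0 n x : x = 0%nat -> input_nm n x = n.
Proof. intros ->. reflexivity. Qed.
Lemma input_nm_ne n x : x <> 0%nat -> input_nm n x = 0%nat.
Proof. intros H. unfold input_nm. destruct (Nat.eqb_spec x 0); congruence. Qed.

Definition agree {A} (m m0 : nat -> A) (L : list nat) : Prop :=
  forall x, ~ In x L -> m x = m0 x.

Lemma agree_refl A (m : nat -> A) L : agree m m L.
Proof. intros x _. auto. Qed.
Lemma agree_weak A (m m0 : nat -> A) L L' :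
  agree m m0 L -> (forall x, In x L -> In x L') -> agree m m0 L'.
Proof. intros H Hi x Hx. apply H. intro; apply Hx; auto. Qed.
Lemma agree_updR (m m0 : nat -> R) L a v : agree m m0 L -> In a L -> agree (updR m a v) m0 L.
Proof. intros H Ha x Hx. rewrite updR_ne by (intros ->; auto). auto. Qed.
Lemma agree_updN (m m0 : nat -> nat) L a v : agree m m0 L -> In a L -> agree (updN m a v) m0 L.
Proof. intros H Ha x Hx. rewrite updN_ne by (intros ->; auto). auto. Qed.

Lemma nth_skipn_hd (P : list nat) l d : nth l P d = hd d (skipn l P).
Proof. revert l. induction P as [|a P IH]; intros [|l]; simpl; auto. Qed.

Lemma skipn_succ_tl (P : list nat) l a t : skipn l P = a :: t -> skipn (S l) P = t.
Proof.
  revert l. induction P as [|b P IH]; intros [|l] H; simpl in *; try discriminate.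
  - injection H; intros; subst; auto.
  - eapply IH; eauto.
Qed.

Lemma skipn_singleton_length (P : list nat) l a : skipn l P = [a] -> length P = S l.
Proof.
  revert l. induction P as [|b P IH]; intros [|l] H; simpl in *; try discriminate.
  - injection H; intros; subst; auto.
  - f_equal. eapply IH; eauto.
Qed.

Lemma map_seq_nth (f : nat -> nat) (P : list nat) len : length P = len ->
  (forall x, (x < len)%nat -> f x = nth x P 0%nat) -> map f (seq 0 len) = P.
Proof.
  intros HL Hf. apply nth_ext with (d := 0%nat) (d' := 0%nat).
  - rewrite length_map, length_seq. auto.
  - intros x Hx. rewrite length_map, length_seq in Hx.
    rewrite nth_indep with (d' := f 0%nat) by (rewrite length_map, length_seq; auto).
    rewrite map_nth, seq_nth by auto. apply Hf. auto.
Qed.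

Section Input.
Variables (n : nat) (Qcap alpha : R) (q dn dout din : nat -> R).

Lemma input_rm_block b o : (1 <= b <= n)%nat -> (o < 5)%nat ->
  input_rm n Qcap alpha q dn dout din (5 * b + o) =
  match o with 0 => q b | 1 => dnext n dn b | 2 => dout b | 3 => din b | _ => 0 end.
Proof.
  intros Hb Ho. unfold input_rm.
  replace (5 * b + o =? 0)%nat with false by (symmetry; apply Nat.eqb_neq; lia).
  replace (5 * b + o =? 1)%nat with false by (symmetry; apply Nat.eqb_neq; lia).
  rewrite <- (Nat.div_unique (5 * b + o) 5 b o), <- (Nat.mod_unique (5 * b + o) 5 b o) by lia.
  replace ((1 <=? b) && (b <=? n))%bool with true
    by (symmetry; apply andb_true_intro; split; apply Nat.leb_le; lia).
  destruct o as [|[|[|[|o]]]]; auto.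
Qed.

Lemma input_rm_high x : (5 * n + 5 <= x)%nat -> input_rm n Qcap alpha q dn dout din x = 0.
Proof.
  intros Hx. unfold input_rm.
  replace (x =? 0)%nat with false by (symmetry; apply Nat.eqb_neq; lia).
  replace (x =? 1)%nat with false by (symmetry; apply Nat.eqb_neq; lia).
  assert (n + 1 <= x / 5)%nat by (apply Nat.div_le_lower_bound; lia).
  replace (x / 5 <=? n)%nat with false by (symmetry; apply Nat.leb_gt; lia).
  rewrite Bool.andb_false_r. auto.
Qed.

End Input.

Notation regN := 0%nat (only parsing).
Notation regI := 10%nat (only parsing).
Notation regHi := 11%nat (only parsing).
Notation regBack := 12%nat (only parsing).
Notation regFront := 13%nat (only parsing).
Notation regOne := 14%nat (only parsing).
Notation regFive := 15%nat (only parsing).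
Notation regBlk := 16%nat (only parsing).
Notation regTwo := 18%nat (only parsing).
Notation regThree := 19%nat (only parsing).
Notation regAddr := 20%nat (only parsing).
Notation regTop := 21%nat (only parsing).
Notation regRestArg := 22%nat (only parsing).
Notation regArg := 23%nat (only parsing).
Notation regBaseU := 24%nat (only parsing).
Notation regBaseT := 25%nat (only parsing).
Notation regBaseS := 26%nat (only parsing).
Notation regBaseE := 27%nat (only parsing).
Notation regBaseSucc := 28%nat (only parsing).
Notation regI1 := 29%nat (only parsing).
Notation regZero := 30%nat (only parsing).

Notation rCap := 0%nat (only parsing).
Notation rAlpha := 1%nat (only parsing).
Notation rAcc := 2%nat (only parsing).
Notation rTmp := 3%nat (only parsing).
Notation rRest := 4%nat (only parsing).

Notation oAddr := 1%nat (only parsing).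
Notation oCur := 2%nat (only parsing).
Notation oWrite := 3%nat (only parsing).
Notation oOne := 4%nat (only parsing).
Notation oSucc := 5%nat (only parsing).

Notation lblLoop := 23%nat (only parsing).
Notation lblPush := 39%nat (only parsing).
Notation lblPop := 46%nat (only parsing).
Notation lblDoPush := 48%nat (only parsing).
Notation lblHi := 56%nat (only parsing).
Notation lblHiBody := 58%nat (only parsing).
Notation lblRestFirst := 71%nat (only parsing).
Notation lblHiNext := 74%nat (only parsing).
Notation lblBack := 76%nat (only parsing).
Notation lblChoose := 81%nat (only parsing).
Notation lblWindow := 83%nat (only parsing).
Notation lblNoWindow := 94%nat (only parsing).
Notation lblTakeRest := 99%nat (only parsing).
Notation lblTakeWindow := 101%nat (only parsing).
Notation lblStore := 103%nat (only parsing).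
Notation lblOut := 118%nat (only parsing).
Notation lblTrav := 143%nat (only parsing).
Notation lblEnd := 149%nat (only parsing).

(* Memory layout, for i counting down from n-1 to 0.  Real cells: customer
   block 5b+o as in the input, then T at 6n+12, S at 7n+14, E at 8n+16 and
   U at 5n+10 (all indexed by vertex).  Integer cells: successors at n+100+j,
   the deque of window indices from 2n+101 on (front at [regBack], one past
   the back at [regFront]), [regBlk] = 5(i+1). *)
Definition prog : list instr := [
  NConst regOne 1; NConst regFive 5; NConst regTwo 2; NConst regThree 3;
  NAdd regBlk regN regN; NAdd regBlk regBlk regBlk; NAdd regBlk regBlk regN;
  NConst regAddr 10; NAdd regBaseU regBlk regAddr;
  NAdd regBaseT regBaseU regN; NAdd regBaseT regBaseT regTwo;
  NAdd regBaseS regBaseT regN; NAdd regBaseS regBaseS regTwo;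
  NAdd regBaseE regBaseS regN; NAdd regBaseE regBaseE regTwo;
  NConst regAddr 100; NAdd regBaseSucc regN regAddr;
  NAdd regBack regBaseSucc regN; NAdd regBack regBack regOne; NAdd regFront regBack regZero;
  NAdd regHi regN regZero; NSub regI regN regOne; NAdd regI1 regN regZero;
  (* lblLoop: E(i+1) := d_{i+1,i+2} + E(i+2);  U(i+1) := d_{i+1,0} - E(i+1) + S(i+1) *)
  NAdd regAddr regBlk regOne; RLoad rAcc regAddr;
  NAdd regAddr regBaseE regI1; NAdd regAddr regAddr regOne; RLoad rTmp regAddr;
  RAdd rAcc rAcc rTmp; NSub regAddr regAddr regOne; RStore regAddr rAcc;
  NAdd regAddr regBlk regThree; RLoad rTmp regAddr; RSub rTmp rTmp rAcc;
  NAdd regAddr regBaseS regI1; RLoad rAcc regAddr; RAdd rTmp rTmp rAcc;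
  NAdd regAddr regBaseU regI1; RStore regAddr rTmp;
  (* lblPush: pop back entries with a larger U, then push i+1 *)
  NJle regFront regBack lblDoPush;
  NSub regAddr regFront regOne; NLoad regTop regAddr; NAdd regAddr regBaseU regTop;
  RLoad rAcc regAddr; RJle rTmp rAcc lblPop; Jmp lblDoPush;
  NSub regFront regFront regOne; Jmp lblPush;
  NStore regFront regI1; NAdd regFront regFront regOne;
  (* T(i) := T(i+1) + q_{i+1} *)
  NAdd regAddr regBaseT regI1; RLoad rAcc regAddr; RLoad rTmp regBlk; RAdd rAcc rAcc rTmp;
  NAdd regAddr regBaseT regI; RStore regAddr rAcc;
  (* lblHi: move hi out of the window while T(hi) + Q < T(i), feeding the
     running minimum of U(j) - alpha T(j) *)
  NJle regI1 regHi lblHiBody; Jmp lblBack;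
  NAdd regAddr regBaseT regI; RLoad rAcc regAddr; NAdd regAddr regBaseT regHi;
  RLoad rTmp regAddr; RAdd rTmp rTmp rCap; RJle rAcc rTmp lblBack;
  RLoad rTmp regAddr; RMul rTmp rAlpha rTmp; NAdd regAddr regBaseU regHi;
  RLoad rAcc regAddr; RSub rAcc rAcc rTmp;
  NJle regN regHi lblRestFirst; RJle rRest rAcc lblHiNext;
  RConst rRest 0; RAdd rRest rRest rAcc; NAdd regRestArg regHi regZero;
  NSub regHi regHi regOne; Jmp lblHi;
  (* lblBack: drop front entries that left the window *)
  NJle regFront regBack lblChoose; NLoad regTop regBack; NJle regTop regHi lblChoose;
  NAdd regBack regBack regOne; Jmp lblBack;
  (* lblChoose: best of the window front and the running minimum *)
  NJle regI1 regHi lblWindow; Jmp lblNoWindow;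
  NLoad regArg regBack; NAdd regAddr regBaseU regArg; RLoad rTmp regAddr;
  NJle regN regHi lblTakeWindow;
  NAdd regAddr regBaseT regI; RLoad rAcc regAddr; RSub rAcc rAcc rCap;
  RMul rAcc rAlpha rAcc; RAdd rAcc rAcc rRest; RJle rTmp rAcc lblTakeWindow; Jmp lblTakeRest;
  NAdd regAddr regBaseT regI; RLoad rAcc regAddr; RSub rAcc rAcc rCap;
  RMul rAcc rAlpha rAcc; RAdd rAcc rAcc rRest;
  NAdd regArg regRestArg regZero; Jmp lblStore;
  RConst rAcc 0; RAdd rAcc rAcc rTmp;
  (* lblStore: S(i) and the successor of i; next i *)
  NAdd regAddr regBlk regTwo; RLoad rTmp regAddr; RAdd rAcc rAcc rTmp;
  NAdd regAddr regBaseE regI1; RLoad rTmp regAddr; RAdd rAcc rAcc rTmp;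
  NAdd regAddr regBaseS regI; RStore regAddr rAcc;
  NAdd regAddr regBaseSucc regI; NStore regAddr regArg;
  NJle regI regZero lblOut;
  NSub regI regI regOne; NSub regI1 regI1 regOne; NSub regBlk regBlk regFive; Jmp lblLoop;
  (* lblOut: follow successors from 0.  Output cells 2..5 double as the
     registers of this phase, so p_1, p_2, p_3 are stashed at n+99, n+98,
     n+97 and copied into place at lblEnd. *)
  RLoad rCap regBaseS; NAdd oSucc regBaseSucc regZero; NConst oOne 1;
  NConst oCur 0; NConst oWrite 3;
  NJle regN oCur lblEnd; NAdd oAddr oCur oSucc; NLoad oCur oAddr;
  NSub oAddr oSucc oOne; NStore oAddr oCur; NConst oWrite 4;
  NJle regN oCur lblEnd; NAdd oAddr oCur oSucc; NLoad oCur oAddr;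
  NConst oAddr 2; NSub oAddr oSucc oAddr; NStore oAddr oCur; NConst oWrite 5;
  NJle regN oCur lblEnd; NAdd oAddr oCur oSucc; NLoad oCur oAddr;
  NConst oAddr 3; NSub oAddr oSucc oAddr; NStore oAddr oCur; NConst oWrite 6;
  NJle regN oCur lblEnd; NAdd oAddr oCur oSucc; NLoad oCur oAddr;
  NStore oWrite oCur; NAdd oWrite oWrite oOne; Jmp lblTrav;
  NConst 1 3; NSub 0 3 1; NSub 1 5 4; NLoad 3 1; NConst 4 2; NSub 1 5 4; NLoad 4 1;
  NConst 2 3; NSub 1 5 2; NLoad 5 1; NConst 2 0; NAdd 1 0 2;
  Halt
].

Section Run.
Variables (n : nat) (Qcap alpha : R) (q dn dout din : nat -> R).

Local Notation cost := (arc_cost Qcap alpha q dn dout din).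

Definition solved (c : config) : Prop :=
  is_path n (out_path c) /\
  out_cost c = path_cost cost (out_path c) /\
  (forall s, is_path n s -> path_cost cost (out_path c) <= path_cost cost s).

Definition solves_within (c : config) (B : nat) : Prop :=
  exists t, (t <= B)%nat /\ step prog (exec prog t c) = None /\ solved (exec prog t c).

Lemma solves_within_step c c' B : step prog c = Some c' ->
  solves_within c' (B - 1) -> (1 <= B)%nat -> solves_within c B.
Proof.
  intros E [t [Ht H]] HB. exists (S t). split; [lia|]. simpl. rewrite E. auto.
Qed.

Lemma solves_within_mono c B B' : solves_within c B -> (B <= B')%nat -> solves_within c B'.
Proof. intros [t [Ht H]] Hle. exists t. split; [lia|auto]. Qed.

Lemma solves_within_halt c B : step prog c = None -> solved c -> solves_within c B.
Proof. intros H1 H2. exists 0%nat. split; [lia|]. simpl. auto. Qed.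

End Run.

Ltac simp_mem1 :=
  let side := (simpl; lia) in
  match goal with
  | |- context [updR ?r ?a ?v ?x] =>
      first [ rewrite (updR_eq r a v x) by side | rewrite (updR_ne r a v x) by side ]
  | |- context [updN ?r ?a ?v ?x] =>
      first [ rewrite (updN_eq r a v x) by side | rewrite (updN_ne r a v x) by side ]
  | |- context [input_nm ?n ?x] =>
      first [ rewrite (input_nm_0 n x) by side | rewrite (input_nm_ne n x) by side ]
  | H : ?m ?x = ?v |- context [?m ?x] => is_var m; rewrite H
  | H : agree ?m ?m0 ?L |- context [?m ?y] => rewrite (H y) by (unfold In; lia)
  | |- context [(S ?x - 1)%nat] => replace (S x - 1)%nat with x by lia
  | |- context [(?x + 0)%nat] => rewrite (Nat.add_0_r x)
  end.
Ltac simp_mem := repeat simp_mem1.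

Ltac simp_leb :=
  repeat match goal with
  | |- context [Nat.leb ?a ?b] =>
     first [ rewrite (proj2 (Nat.leb_le a b)) by lia
           | rewrite (proj2 (Nat.leb_gt a b)) by lia ]
  end.

Ltac step1 :=
  match goal with
  | |- solves_within _ _ _ _ _ _ _ (Config _ _ _) _ =>
    eapply solves_within_step; [ cbv [step prog nth]; reflexivity | simp_mem; simp_leb | lia ]
  end.

Ltac solve_agree :=
  repeat (first [apply agree_updN | apply agree_updR]; [| simpl; intuition lia]);
  try assumption; try apply agree_refl;
  try (eapply agree_weak; [eassumption | simpl; intuition lia]).

Ltac rewrite_table H j :=
  match goal with |- context [?r ?x] => rewrite (H x j) by (try reflexivity; lia) end.
Ltac rewrite_input H b o :=
  match goal with |- context [?r ?x] => rewrite (H x b o) by (try reflexivity; lia) end.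

Section Algorithm.
Variables (n : nat) (Qcap alpha : R) (q dn dout din : nat -> R).
Hypothesis Hn : (1 <= n)%nat.
Hypothesis Hq : forall i, (1 <= i <= n)%nat -> 0 <= q i.

Local Notation baseU := (5 * n + 10)%nat.
Local Notation baseT := (6 * n + 12)%nat.
Local Notation baseS := (7 * n + 14)%nat.
Local Notation baseE := (8 * n + 16)%nat.
Local Notation dqBase := (2 * n + 101)%nat.
Local Notation load_after := (load_after n q).
Local Notation dist_from := (dist_from n dn).
Local Notation dnext := (dnext n dn).
Local Notation cost := (arc_cost Qcap alpha q dn dout din).
Local Notation succ_path := (succ_path n).
Local Notation succ_ok := (succ_ok n).
Local Notation path_lb := (path_lb n Qcap alpha q dn dout din).
Local Notation solves_within := (solves_within n Qcap alpha q dn dout din).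

(* Deque cells bp..fp-1 hold window indices in [lo, hi], decreasing from
   front to back with nondecreasing U; every index of the window is
   dominated by a deque entry. *)
Definition deque_ok (lo hi bp fp : nat) (r : nat -> R) (m : nat -> nat) : Prop :=
  (forall a, (bp <= a < fp)%nat -> (lo <= m a <= hi)%nat) /\
  (forall a a', (bp <= a)%nat -> (a < a')%nat -> (a' < fp)%nat ->
      (m a' < m a)%nat /\ r (baseU + m a)%nat <= r (baseU + m a')%nat) /\
  (forall j, (lo <= j <= hi)%nat -> exists a, (bp <= a < fp)%nat /\ (m a <= j)%nat /\
      r (baseU + m a)%nat <= r (baseU + j)%nat).

Definition rest_key (r : nat -> R) (j : nat) : R := r (baseU + j)%nat - alpha * load_after j.

Definition rest_min_ok (hi : nat) (v : R) (jr : nat) (r : nat -> R) : Prop :=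
  (hi < n)%nat -> (hi < jr <= n)%nat /\ v = rest_key r jr /\
     forall j, (hi < j <= n)%nat -> rest_key r jr <= rest_key r j.

Record frame (i hi bp fp : nat) (r : nat -> R) (m : nat -> nat) : Prop := {
  fr_n : m regN = n; fr_i : m regI = i; fr_i1 : m regI1 = S i; fr_blk : m regBlk = (5 * S i)%nat;
  fr_hi : m regHi = hi; fr_back : m regBack = bp; fr_front : m regFront = fp;
  fr_one : m regOne = 1%nat; fr_five : m regFive = 5%nat; fr_two : m regTwo = 2%nat;
  fr_three : m regThree = 3%nat; fr_baseU : m regBaseU = baseU; fr_baseT : m regBaseT = baseT;
  fr_baseS : m regBaseS = baseS; fr_baseE : m regBaseE = baseE;
  fr_baseSucc : m regBaseSucc = (n + 100)%nat; fr_zero : m regZero = 0%nat;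
  fr_cap : r rCap = Qcap; fr_alpha : r rAlpha = alpha }.

Record tables (i kT kEU : nat) (r : nat -> R) (m : nat -> nat) : Prop := {
  tb_input : forall x b o, x = (5 * b + o)%nat -> (1 <= b <= S i)%nat -> (o < 4)%nat ->
     r x = match o with 0 => q b | 1 => dnext b | 2 => dout b | _ => din b end;
  tb_T : forall x j, x = (baseT + j)%nat -> (kT <= j <= n)%nat -> r x = load_after j;
  tb_E : forall x j, x = (baseE + j)%nat -> (kEU <= j <= S n)%nat -> r x = dist_from j;
  tb_S : forall x j, x = (baseS + j)%nat -> (S i <= j <= n)%nat ->
     r x = path_cost cost (succ_path m j) /\ path_lb j (r x);
  tb_U : forall x j, x = (baseU + j)%nat -> (kEU <= j <= n)%nat ->
     r x = din j - dist_from j + r (baseS + j)%nat;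
  tb_succ : succ_ok m (S i) }.

Record inv_loop (i hi bp fp : nat) (r : nat -> R) (m : nat -> nat) : Prop := {
  il_frame : frame i hi bp fp r m;
  il_tables : tables i (S i) (S (S i)) r m;
  il_hi : (S i <= hi <= n)%nat;
  il_deque_base : (dqBase <= bp <= fp)%nat;
  il_rest : rest_min_ok hi (r rRest) (m regRestArg) r;
  il_beyond : forall j, (hi < j <= n)%nat -> load_after j + Qcap < load_after (S i);
  il_deque : deque_ok (S (S i)) hi bp fp r m }.

Record inv_pushed (i hi bp fp : nat) (r : nat -> R) (m : nat -> nat) : Prop := {
  ip_frame : frame i hi bp fp r m;
  ip_tables : tables i i (S i) r m;
  ip_hi : (S i <= hi <= n)%nat;
  ip_deque_base : (dqBase <= bp < fp)%nat;
  ip_rest : rest_min_ok hi (r rRest) (m regRestArg) r;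
  ip_beyond : forall j, (hi < j <= n)%nat -> load_after j + Qcap < load_after (S i);
  ip_deque : deque_ok (S i) hi bp fp r m }.

Record inv_choose (i hi bp fp : nat) (r : nat -> R) (m : nat -> nat) : Prop := {
  ic_frame : frame i hi bp fp r m;
  ic_tables : tables i i (S i) r m;
  ic_hi : (i <= hi <= n)%nat;
  ic_i : (S i <= n)%nat;
  ic_deque_base : (dqBase <= bp <= fp)%nat;
  ic_rest : rest_min_ok hi (r rRest) (m regRestArg) r;
  ic_beyond : forall j, (hi < j <= n)%nat -> load_after j + Qcap < load_after i;
  ic_window : forall j, (S i <= j <= hi)%nat -> load_after i <= load_after j + Qcap;
  ic_deque : deque_ok (S i) hi bp fp r m }.

Lemma rest_min_ok_ext hi v jr (r r' : nat -> R) :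
  (forall j, (hi < j <= n)%nat -> r' (baseU + j)%nat = r (baseU + j)%nat) ->
  rest_min_ok hi v jr r -> rest_min_ok hi v jr r'.
Proof.
  intros He H Hc. destruct (H Hc) as [A [B C]]. unfold rest_key in *.
  split; auto. rewrite !He by lia. split; auto. intros j Hj. rewrite !He by lia. apply C; auto.
Qed.

Lemma deque_ok_ext lo hi bp fp (r r' : nat -> R) (m m' : nat -> nat) :
  (forall a, (bp <= a < fp)%nat -> m' a = m a) ->
  (forall j, (lo <= j <= hi)%nat -> r' (baseU + j)%nat = r (baseU + j)%nat) ->
  deque_ok lo hi bp fp r m -> deque_ok lo hi bp fp r' m'.
Proof.
  intros Hm Hr [A [B C]]. split; [|split].
  - intros a Ha. rewrite Hm by lia. auto.
  - intros a a' H1 H2 H3. rewrite !Hm by lia.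
    pose proof (A a ltac:(lia)). pose proof (A a' ltac:(lia)). rewrite !Hr by lia. apply B; lia.
  - intros j Hj. destruct (C j Hj) as [a [Ha1 [Ha2 Ha3]]]. exists a. rewrite Hm by lia.
    pose proof (A a ltac:(lia)). rewrite !Hr by lia. auto.
Qed.

Lemma deque_ok_front_min lo hi bp fp r m : (lo <= hi)%nat -> deque_ok lo hi bp fp r m ->
  (bp < fp)%nat /\ (lo <= m bp <= hi)%nat /\
  forall j, (lo <= j <= hi)%nat -> r (baseU + m bp)%nat <= r (baseU + j)%nat.
Proof.
  intros Hl [A [B C]].
  destruct (C lo ltac:(lia)) as [a0 [Ha0 _]].
  split; [lia|]. split; [apply A; lia|].
  intros j Hj. destruct (C j Hj) as [a [Ha1 [Ha2 Ha3]]].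
  destruct (Nat.eq_dec a bp) as [->|]; auto.
  destruct (B bp a ltac:(lia) ltac:(lia) ltac:(lia)) as [_ H]. lra.
Qed.

Lemma deque_ok_pop_front lo hi hi' bp bp' fp r m : deque_ok lo hi bp fp r m -> (hi' <= hi)%nat ->
  (bp <= bp' <= fp)%nat -> (forall a, (bp <= a < bp')%nat -> (hi' < m a)%nat) ->
  (bp' = fp \/ ((bp' < fp)%nat /\ (m bp' <= hi')%nat)) -> deque_ok lo hi' bp' fp r m.
Proof.
  intros [A [B C]] Hh Hb Hp He. split; [|split].
  - intros a Ha. pose proof (A a ltac:(lia)). destruct He as [He|[He1 He2]]; [lia|].
    destruct (Nat.eq_dec a bp') as [->|]; [lia|].
    destruct (B bp' a ltac:(lia) ltac:(lia) ltac:(lia)). lia.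
  - intros a a' H1 H2 H3. apply B; lia.
  - intros j Hj. destruct (C j ltac:(lia)) as [a [Ha1 [Ha2 Ha3]]].
    destruct (le_lt_dec bp' a).
    + exists a. split; [lia|auto].
    + pose proof (Hp a ltac:(lia)). lia.
Qed.

Lemma deque_ok_push_back k hi bp fp fp' (r r' : nat -> R) (m m' : nat -> nat) uk :
  deque_ok (S k) hi bp fp r m -> (k <= hi)%nat -> (bp <= fp' <= fp)%nat ->
  (forall a, (fp' <= a < fp)%nat -> uk <= r (baseU + m a)%nat) ->
  (fp' = bp \/ ((bp < fp')%nat /\ r (baseU + m (fp' - 1))%nat < uk)) ->
  m' fp' = k -> (forall a, (bp <= a < fp')%nat -> m' a = m a) ->
  r' (baseU + k)%nat = uk ->
  (forall j, (S k <= j <= hi)%nat -> r' (baseU + j)%nat = r (baseU + j)%nat) ->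
  deque_ok k hi bp (S fp') r' m'.
Proof.
  intros [A [B C]] Hk Hf Hpop Hex Hm1 Hm2 Hr1 Hr2. split; [|split].
  - intros a Ha. destruct (Nat.eq_dec a fp') as [->|]; [lia|]. rewrite Hm2 by lia.
    pose proof (A a ltac:(lia)). lia.
  - intros a a' H1 H2 H3. rewrite (Hm2 a) by lia. pose proof (A a ltac:(lia)).
    destruct (Nat.eq_dec a' fp') as [->|].
    + rewrite Hm1, Hr1, Hr2 by lia. split; [lia|].
      destruct Hex as [Hex|[Hex1 Hex2]]; [lia|].
      destruct (Nat.eq_dec a (fp' - 1)%nat) as [->|]; [lra|].
      destruct (B a (fp' - 1)%nat ltac:(lia) ltac:(lia) ltac:(lia)). lra.
    + rewrite (Hm2 a') by lia. pose proof (A a' ltac:(lia)). rewrite !Hr2 by lia. apply B; lia.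
  - intros j Hj. destruct (Nat.eq_dec j k) as [->|].
    + exists fp'. rewrite Hm1. split; [lia|]. split; [lia|lra].
    + destruct (C j ltac:(lia)) as [a [Ha1 [Ha2 Ha3]]]. pose proof (A a ltac:(lia)).
      destruct (le_lt_dec fp' a).
      * exists fp'. rewrite Hm1, Hr1, (Hr2 j) by lia. split; [lia|]. split; [lia|].
        pose proof (Hpop a ltac:(lia)). lra.
      * exists a. rewrite Hm2 by lia. rewrite !Hr2 by lia. split; [lia|auto].
Qed.

Definition candidate (r : nat -> R) (i j : nat) : R :=
  r (baseU + j)%nat + alpha * Rmax (load_after i - load_after j - Qcap) 0.

Lemma candidate_in_window r i j : load_after i <= load_after j + Qcap ->
  candidate r i j = r (baseU + j)%nat.
Proof. intros H. unfold candidate. rewrite Rmax_right by lra. ring. Qed.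

Lemma candidate_beyond_window r i j : load_after j + Qcap < load_after i ->
  candidate r i j = alpha * (load_after i - Qcap) + rest_key r j.
Proof. intros H. unfold candidate, rest_key. rewrite Rmax_left by lra. ring. Qed.

(* Loop lemmas take as first hypothesis the behaviour of the program at the
   loop exit, for every exit state reachable under the loop invariant. *)
Lemma push_loop_ok bp fp0 (r0 : nat -> R) (m0 : nat -> nat) (uk : R) (B : nat) :
  (forall fp r m, m regFront = fp -> m regBack = bp -> m regOne = 1%nat -> m regBaseU = baseU ->
     r rTmp = uk -> agree m m0 [regFront; regAddr; regTop] -> agree r r0 [rAcc] ->
     (bp <= fp <= fp0)%nat ->
     (forall a, (fp <= a < fp0)%nat -> uk <= r0 (baseU + m0 a)%nat) ->
     (fp = bp \/ ((bp < fp)%nat /\ r0 (baseU + m0 (fp - 1))%nat < uk)) ->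
     solves_within (Config lblDoPush r m) (B + 8 * (fp - bp))) ->
  (dqBase <= bp)%nat ->
  forall fp r m, m regFront = fp -> m regBack = bp -> m regOne = 1%nat -> m regBaseU = baseU ->
     r rTmp = uk -> agree m m0 [regFront; regAddr; regTop] -> agree r r0 [rAcc] ->
     (bp <= fp <= fp0)%nat ->
     (forall a, (fp <= a < fp0)%nat -> uk <= r0 (baseU + m0 a)%nat) ->
     solves_within (Config lblPush r m) (B + 8 * (fp - bp) + 7).
Proof.
  intros Hcont Hbp fp.
  induction fp as [|fp IH]; intros r m Hfr Hbk Hone HU Htmp Agm Agr Hfp Hpop; [lia|].
  step1. destruct (Nat.leb_spec (S fp) bp).
  - eapply solves_within_mono; [apply (Hcont (S fp) r m); auto; lia | lia].
  - do 5 step1. destruct (Rle_dec _ _) as [Hle|Hgt].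
    + do 2 step1.
      eapply solves_within_mono; [apply IH | lia]; simp_mem; try lia; try solve_agree; try reflexivity.
      intros a Ha. destruct (Nat.eq_dec a fp) as [->|]; auto. apply Hpop; lia.
    + step1. eapply solves_within_mono; [apply (Hcont (S fp)) | lia];
        simp_mem; try lia; try solve_agree; auto.
      right. split; [lia|]. replace (S fp - 1)%nat with fp by lia. lra.
Qed.

Lemma hi_loop_ok i hi0 (r0 : nat -> R) (m0 : nat -> nat) (B : nat) :
  m0 regI1 = S i -> m0 regI = i -> m0 regBaseT = baseT -> m0 regBaseU = baseU -> m0 regN = n ->
  m0 regOne = 1%nat -> m0 regZero = 0%nat -> r0 rCap = Qcap -> r0 rAlpha = alpha ->
  (forall x j, x = (baseT + j)%nat -> (i <= j <= n)%nat -> r0 x = load_after j) ->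
  (hi0 <= n)%nat ->
  (forall hi r m, m regHi = hi -> agree m m0 [regHi; regAddr; regRestArg] ->
     agree r r0 [rAcc; rTmp; rRest] -> (i <= hi <= hi0)%nat ->
     (forall j, (hi < j <= n)%nat -> load_after j + Qcap < load_after i) ->
     rest_min_ok hi (r rRest) (m regRestArg) r0 ->
     (hi = i \/ ((i < hi)%nat /\ load_after i <= load_after hi + Qcap)) ->
     solves_within (Config lblBack r m) (B + 19 * (hi - i))) ->
  forall hi r m, m regHi = hi -> agree m m0 [regHi; regAddr; regRestArg] ->
     agree r r0 [rAcc; rTmp; rRest] -> (i <= hi <= hi0)%nat ->
     (forall j, (hi < j <= n)%nat -> load_after j + Qcap < load_after i) ->
     rest_min_ok hi (r rRest) (m regRestArg) r0 ->
     solves_within (Config lblHi r m) (B + 19 * (hi - i) + 7).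
Proof.
  intros Hi1 Hi HbT HbU HN Hone Hzero Hcap Halpha HT Hhi0 Hcont hi.
  induction hi as [|hi IH]; intros r m Hhi Agm Agr Hrange Hbeyond Hrest.
  - do 2 step1. eapply solves_within_mono; [apply (Hcont 0%nat r m); auto; lia|lia].
  - step1. destruct (Nat.leb_spec (S i) (S hi)).
    2: { step1. eapply solves_within_mono; [apply (Hcont (S hi) r m); auto; lia|lia]. }
    do 6 step1. rewrite_table HT i. rewrite_table HT (S hi).
    destruct (Rle_dec _ _) as [Hle|Hgt].
    { eapply solves_within_mono; [apply (Hcont (S hi)); simp_mem; auto; try lia; try solve_agree|lia]. }
    do 6 step1. rewrite_table HT (S hi).
    assert (Hw : forall j, (hi < j <= n)%nat -> load_after j + Qcap < load_after i).
    { intros j Hj. destruct (Nat.eq_dec j (S hi)) as [->|]; [lra|]. apply Hbeyond; lia. }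
    destruct (Nat.leb_spec n (S hi)).
    + do 5 step1. eapply solves_within_mono; [apply IH; simp_mem; auto; try lia; try solve_agree|lia].
      intros Hc. split; [lia|]. unfold rest_key. split; [lra|].
      intros j Hj. replace j with (S hi) by lia. lra.
    + step1. destruct (Rle_dec _ _) as [Hle2|Hgt2].
      * do 2 step1. eapply solves_within_mono; [apply IH; simp_mem; auto; try lia; try solve_agree|lia].
        intros Hc. destruct (Hrest ltac:(lia)) as [A [B1 C]]. split; [lia|]. split; [auto|].
        intros j Hj. destruct (Nat.eq_dec j (S hi)) as [->|].
        -- unfold rest_key at 2. lra.
        -- apply C. lia.
      * do 5 step1. eapply solves_within_mono; [apply IH; simp_mem; auto; try lia; try solve_agree|lia].
        intros Hc. destruct (Hrest ltac:(lia)) as [A [B1 C]]. split; [lia|].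
        unfold rest_key. split; [lra|].
        intros j Hj. destruct (Nat.eq_dec j (S hi)) as [->|]; [lra|].
        specialize (C j ltac:(lia)). unfold rest_key in *. lra.
Qed.

Lemma back_loop_ok hi fp bp0 (r : nat -> R) (m0 : nat -> nat) (B : nat) :
  m0 regHi = hi -> m0 regFront = fp -> m0 regOne = 1%nat -> (dqBase <= bp0)%nat ->
  (forall bp m, m regBack = bp -> agree m m0 [regBack; regTop] -> (bp0 <= bp <= fp)%nat ->
     (forall a, (bp0 <= a < bp)%nat -> (hi < m0 a)%nat) ->
     (bp = fp \/ ((bp < fp)%nat /\ (m0 bp <= hi)%nat)) ->
     solves_within (Config lblChoose r m) (B + 8 * (fp - bp))) ->
  forall d bp m, d = (fp - bp)%nat -> m regBack = bp -> agree m m0 [regBack; regTop] ->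
     (bp0 <= bp <= fp)%nat -> (forall a, (bp0 <= a < bp)%nat -> (hi < m0 a)%nat) ->
     solves_within (Config lblBack r m) (B + 8 * (fp - bp) + 3).
Proof.
  intros Hhi Hfront Hone Hbp0 Hcont d.
  induction d as [|d IH]; intros bp m Hd Hbk Agm Hbp Hpass.
  - step1. eapply solves_within_mono; [apply (Hcont bp m); auto; lia|lia].
  - do 3 step1. destruct (Nat.leb_spec (m0 bp) hi).
    + eapply solves_within_mono; [apply (Hcont bp); simp_mem; auto; try lia; try solve_agree|lia].
    + do 2 step1. eapply solves_within_mono; [apply (IH (S bp)); simp_mem; try lia; try solve_agree|lia].
      intros a Ha. destruct (Nat.eq_dec a bp) as [->|]; [lia|]. apply Hpass; lia.
Qed.

Lemma succ_path_skipn_next m l c : succ_ok m 0 -> (c < n)%nat ->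
  skipn l (succ_path m 0) = succ_path m c ->
  skipn (S l) (succ_path m 0) = succ_path m (m (succ_base n + c)%nat) /\
  nth (S l) (succ_path m 0) 0%nat = m (succ_base n + c)%nat.
Proof.
  intros Hs Hc Hsk. rewrite (succ_path_cons n m 0 c Hs) in Hsk by lia.
  pose proof (skipn_succ_tl _ _ _ _ Hsk) as Hsk'. split; auto.
  rewrite nth_skipn_hd, Hsk'. destruct (succ_path_hd n m (m (succ_base n + c)%nat)) as [t ->].
  reflexivity.
Qed.

Lemma output_end_ok (mS : nat -> nat) (r : nat -> R) (m : nat -> nat) l :
  succ_ok mS 0 -> r rCap = path_cost cost (succ_path mS 0) -> path_lb 0 (r rCap) ->
  m oWrite = (3 + l)%nat -> m oOne = 1%nat -> m oSucc = (n + 100)%nat ->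
  skipn l (succ_path mS 0) = [n] ->
  (forall x, (1 <= x <= 3)%nat -> (x <= l)%nat -> m (n + 100 - x)%nat = nth x (succ_path mS 0) 0%nat) ->
  (forall x, (4 <= x <= l)%nat -> m (2 + x)%nat = nth x (succ_path mS 0) 0%nat) ->
  solves_within (Config lblEnd r m) 12.
Proof.
  intros Hs Hr0 Hopt Hwrite Hone Hsucc Hsk Hst Hwr.
  do 12 step1. apply solves_within_halt; [reflexivity|].
  pose proof (skipn_singleton_length _ _ _ Hsk) as HL.
  pose proof (succ_path_is_path n mS 0 Hs 0 ltac:(lia)) as Hp.
  unfold solved, out_path, out_cost. cbn [nm rm pc]. simp_mem.
  replace (3 + l - 3)%nat with l by lia.
  rewrite (map_seq_nth _ (succ_path mS 0) (S l)); auto.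
  - split; [exact Hp|]. split; [auto|]. intros s Hs'. rewrite <- Hr0. apply Hopt. exact Hs'.
  - intros x Hx. cbv beta.
    destruct x as [|[|[|[|x]]]]; simp_mem; try (apply Hst || apply Hwr; lia).
    destruct (succ_path_hd n mS 0) as [t ->]. reflexivity.
Qed.

Lemma traverse_loop_ok (mS : nat -> nat) (r : nat -> R) :
  succ_ok mS 0 -> r rCap = path_cost cost (succ_path mS 0) -> path_lb 0 (r rCap) ->
  forall d c l m, d = (n - c)%nat ->
  m regN = n -> m oCur = c -> m oWrite = (3 + l)%nat -> m oOne = 1%nat ->
  m oSucc = (n + 100)%nat -> (3 <= l <= c)%nat -> (c <= n)%nat ->
  (forall x j, x = (n + 100 + j)%nat -> (j < n)%nat -> m x = mS x) ->
  skipn l (succ_path mS 0) = succ_path mS c ->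
  (forall x, (1 <= x <= 3)%nat -> m (n + 100 - x)%nat = nth x (succ_path mS 0) 0%nat) ->
  (forall x, (4 <= x <= l)%nat -> m (2 + x)%nat = nth x (succ_path mS 0) 0%nat) ->
  solves_within (Config lblTrav r m) (6 * (n - c) + 13).
Proof.
  intros Hs Hr0 Hopt d. induction d as [d IH] using lt_wf_ind.
  intros c l m Hd HN Hcur Hwrite Hone Hsucc Hl Hc Hsm Hsk Hst Hwr.
  step1. destruct (Nat.leb_spec n c).
  - replace c with n in * by lia.
    eapply solves_within_mono; [apply (output_end_ok mS r m l); auto|lia].
    all: try (rewrite Hsk; apply succ_path_n). all: intros; apply Hst; lia.
  - pose proof (Hs c ltac:(lia)) as Hc'. unfold succ_base in Hc'.
    do 2 step1. rewrite (Hsm (c + (n + 100))%nat c) by lia.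
    replace (c + (n + 100))%nat with (succ_base n + c)%nat by (unfold succ_base; lia).
    do 3 step1.
    destruct (succ_path_skipn_next mS l c Hs ltac:(lia) Hsk) as [Hsk' Hnth].
    unfold succ_base in *.
    eapply solves_within_mono;
      [apply (IH (n - mS (n + 100 + c))%nat) with (c := mS (n + 100 + c)%nat) (l := S l);
       simp_mem; auto; try lia | lia].
    + intros x j -> Hj. simp_mem. apply Hsm with j; lia.
    + intros x Hx. simp_mem. apply Hst; lia.
    + intros x Hx. destruct (Nat.eq_dec x (S l)) as [->|].
      * simp_mem. rewrite Hnth. f_equal; lia.
      * simp_mem. apply Hwr; lia.
Qed.

Lemma output_ok (r : nat -> R) (m : nat -> nat) :
  m regN = n -> m regBaseS = baseS -> m regBaseSucc = (n + 100)%nat -> m regZero = 0%nat ->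
  succ_ok m 0 -> r baseS = path_cost cost (succ_path m 0) -> path_lb 0 (r baseS) ->
  solves_within (Config lblOut r m) (6 * n + 80).
Proof.
  intros HN HbS HbSucc Hzero Hs Hr Hopt.
  destruct (succ_path_skipn_next m 0 0 Hs ltac:(lia) eq_refl)
    as [Hsk1 Hn1].
  pose proof (Hs 0%nat ltac:(lia)) as Hc1. unfold succ_base in *.
  do 10 step1. replace (0 + (n + 100))%nat with (n + 100 + 0)%nat by lia.
  set (c1 := m (n + 100 + 0)%nat) in *.
  step1. step1. destruct (Nat.leb_spec n c1).
  { eapply solves_within_mono; [apply (output_end_ok m _ _ 1);
      simp_mem; auto; try lia|lia].
    all: try (rewrite <- Hr; exact Hopt).
    - rewrite Hsk1. replace c1 with n by lia. apply succ_path_n.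
    - intros x Hx Hx'. replace x with 1%nat by lia. simp_mem. auto. }
  pose proof (Hs c1 ltac:(lia)) as Hc2. unfold succ_base in Hc2.
  destruct (succ_path_skipn_next m 1 c1 Hs ltac:(lia) Hsk1)
    as [Hsk2 Hn2].
  unfold succ_base in *.
  do 2 step1. replace (c1 + (n + 100))%nat with (n + 100 + c1)%nat by lia.
  set (c2 := m (n + 100 + c1)%nat) in *.
  do 5 step1. destruct (Nat.leb_spec n c2).
  { eapply solves_within_mono; [apply (output_end_ok m _ _ 2);
      simp_mem; auto; try lia|lia].
    all: try (rewrite <- Hr; exact Hopt).
    - rewrite Hsk2. replace c2 with n by lia. apply succ_path_n.
    - intros x Hx Hx'. assert (x = 1%nat \/ x = 2%nat) as [->| ->] by lia; simp_mem; auto. }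
  pose proof (Hs c2 ltac:(lia)) as Hc3. unfold succ_base in Hc3.
  destruct (succ_path_skipn_next m 2 c2 Hs ltac:(lia) Hsk2)
    as [Hsk3 Hn3].
  unfold succ_base in *.
  do 2 step1. replace (c2 + (n + 100))%nat with (n + 100 + c2)%nat by lia.
  set (c3 := m (n + 100 + c2)%nat) in *.
  do 4 step1.
  eapply solves_within_mono; [eapply (traverse_loop_ok m _ _ _ _ (n - c3) c3 3) | lia].
  all: simp_mem; auto; try lia.
  all: try (rewrite <- Hr; exact Hopt).
  - intros x j -> Hj. simp_mem. auto.
  - intros x Hx. assert (x = 1%nat \/ x = 2%nat \/ x = 3%nat) as [->|[->| ->]] by lia; simp_mem; auto.
  Unshelve. all: simp_mem; auto. all: rewrite <- Hr; exact Hopt.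
Qed.

Lemma bellman_store i jb best (r0 : nat -> R) (m0 m : nat -> nat) :
  (i < jb <= n)%nat -> tables i i (S i) r0 m0 ->
  m (n + 100 + i)%nat = jb ->
  (forall j, (S i <= j < n)%nat -> m (n + 100 + j)%nat = m0 (n + 100 + j)%nat) ->
  best = candidate r0 i jb -> (forall j, (i < j <= n)%nat -> best <= candidate r0 i j) ->
  succ_ok m i /\ (forall j, (S i <= j <= n)%nat -> succ_path m j = succ_path m0 j) /\
  best + dout (S i) + dist_from (S i) = path_cost cost (succ_path m i) /\
  path_lb i (best + dout (S i) + dist_from (S i)).
Proof.
  intros Hjb [_ _ _ HS HU Hsucc] Hm Hm0 Hbest Hmin. unfold candidate in *.
  assert (Hs : succ_ok m i).
  { intros j Hj. unfold succ_base. destruct (Nat.eq_dec j i) as [->|].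
    - rewrite Hm. lia.
    - rewrite Hm0 by lia. apply Hsucc. lia. }
  assert (Hpath : forall j, (S i <= j <= n)%nat -> succ_path m j = succ_path m0 j).
  { intros j Hj. apply (succ_path_ext n m0 m (S i) Hsucc); [intros j' Hj'; apply Hm0 | ]; lia. }
  split; [exact Hs|]. split; [exact Hpath|]. split.
  - rewrite (succ_path_cost n Qcap alpha q dn dout din m i i Hs) by lia. unfold succ_base.
    rewrite Hm, Hpath by lia. destruct (HS _ jb eq_refl ltac:(lia)) as [<- _].
    rewrite (arc_cost_split n) by lia. rewrite (HU _ jb eq_refl ltac:(lia)) in Hbest. lra.
  - replace (best + dout (S i) + dist_from (S i)) with (dout (S i) + dist_from (S i) + best) by ring.
    apply path_lb_bellman with (S := fun j => r0 (baseS + j)%nat) (U := fun j => r0 (baseU + j)%nat).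
    + lia.
    + intros j Hj. apply (HS _ j eq_refl). lia.
    + intros j Hj. apply (HU _ j eq_refl). lia.
    + auto.
Qed.

Definition budget_loop (i hi bp fp : nat) : nat :=
  (100 * S i + 8 * (fp - bp) + 19 * (hi - i) + 6 * n + 80)%nat.

Lemma store_ok i hi bp fp (r0 r : nat -> R) (m0 m : nat -> nat) jb best :
  inv_choose i hi bp fp r0 m0 -> agree r r0 [rAcc; rTmp] -> agree m m0 [regAddr; regArg] ->
  m regArg = jb -> r rAcc = best -> (i < jb <= n)%nat ->
  best = candidate r0 i jb -> (forall j, (i < j <= n)%nat -> best <= candidate r0 i j) ->
  ((0 < i)%nat -> forall hi bp fp r m, inv_loop (i - 1) hi bp fp r m ->
     solves_within (Config lblLoop r m) (budget_loop (i - 1) hi bp fp)) ->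
  solves_within (Config lblStore r m) (100 * i + 8 * (fp - bp) + 19 * (hi - i) + 6 * n + 114).
Proof.
  intros [Fr Tb Xrng Xin Xdq0 Xrest Xbeyond Xwindow Xdq] Agr Agm Harg Hacc Hjb Hbest Hmin Hnext.
  pose proof Tb as [Xinp XT XE XS XU Xsucc]. destruct Fr.
  do 2 step1. rewrite_input Xinp (S i) 2%nat. do 3 step1. rewrite_table XE (S i). do 5 step1.
  set (v := best + dout (S i) + dist_from (S i)) in *.
  match goal with |- solves_within (Config _ ?R ?M) _ => set (r' := R) in *; set (m' := M) in * end.
  assert (Ar' : agree r' r0 [rAcc; rTmp; (baseS + i)%nat]) by (subst r'; solve_agree).
  assert (Am' : agree m' m0 [regAddr; regArg; (n + 100 + i)%nat]) by (subst m'; solve_agree).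
  assert (Er' : r' (baseS + i)%nat = v) by (subst r'; simp_mem; auto).
  assert (Em' : m' (n + 100 + i)%nat = jb) by (subst m'; simp_mem; auto).
  clearbody r' m'.
  destruct (bellman_store i jb best r0 m0 m' Hjb Tb Em') as [Hs [Hpath [Hval Hopt]]]; auto.
  { intros j Hj. simp_mem. auto. }
  step1. destruct (Nat.leb_spec i 0).
  - assert (i = 0%nat) as -> by lia. rewrite Nat.add_0_r in Er'.
    eapply solves_within_mono; [apply output_ok; simp_mem; auto|lia].
  - do 4 step1. eapply solves_within_mono; [apply (Hnext ltac:(lia) hi bp fp)|unfold budget_loop; lia].
    constructor; [constructor; simp_mem; try lia; reflexivity|constructor|..];
      try lia; try replace (S (i - 1)) with i by lia.
    + intros x b o -> Hb Ho. simp_mem. apply Xinp; lia.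
    + intros x j -> Hj. simp_mem. apply XT; lia.
    + intros x j -> Hj. simp_mem. apply XE; lia.
    + intros x j -> Hj. rewrite (succ_path_ext n m' _ i Hs);
        [| intros; unfold succ_base; simp_mem; auto | lia].
      destruct (Nat.eq_dec j i) as [->|].
      * simp_mem. split; auto.
      * simp_mem. rewrite Hpath by lia. apply XS; lia.
    + intros x j -> Hj. simp_mem. apply XU; lia.
    + intros j Hj. unfold succ_base. simp_mem. apply Hs. lia.
    + simp_mem. apply (rest_min_ok_ext _ _ _ r0); auto. intros j Hj. simp_mem. auto.
    + intros j Hj. apply Xbeyond. lia.
    + replace (S (S (i - 1))) with (S i) by lia. apply (deque_ok_ext _ _ _ _ r0 _ m0); auto.
      * intros a Ha. simp_mem. auto.
      * intros j Hj. simp_mem. auto.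
Qed.

Lemma choose_ok i hi bp fp (r : nat -> R) (m : nat -> nat) :
  inv_choose i hi bp fp r m ->
  ((0 < i)%nat -> forall hi bp fp r m, inv_loop (i - 1) hi bp fp r m ->
     solves_within (Config lblLoop r m) (budget_loop (i - 1) hi bp fp)) ->
  solves_within (Config lblChoose r m) (100 * i + 8 * (fp - bp) + 19 * (hi - i) + 6 * n + 128).
Proof.
  intros HI Hnext. pose proof HI as [Fr Tb Xrng Xin Xdq0 Xrest Xbeyond Xwindow Xdq].
  pose proof Tb as [Xinp XT XE XS XU Xsucc]. destruct Fr.
  assert (Hin : forall j, (S i <= j <= hi)%nat -> candidate r i j = r (baseU + j)%nat)
    by (intros j Hj; apply candidate_in_window, Xwindow; lia).
  assert (Hout : forall j, (hi < j <= n)%nat ->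
            candidate r i j = alpha * (load_after i - Qcap) + rest_key r j)
    by (intros j Hj; apply candidate_beyond_window, Xbeyond; lia).
  step1. destruct (Nat.leb_spec (S i) hi) as [Hw|Hw].
  - destruct (deque_ok_front_min _ _ _ _ _ _ Hw Xdq) as [Hbf [Hjb Hwm]].
    do 4 step1. destruct (Nat.leb_spec n hi).
    + do 2 step1. eapply solves_within_mono; [eapply (store_ok i hi bp fp r) with (jb := m bp)|lia].
      all: try eassumption. all: simp_mem; try solve_agree; try reflexivity; try lia.
      * rewrite Hin by lia. ring.
      * intros j Hj. rewrite Hin by lia. specialize (Hwm j ltac:(lia)). lra.
    + do 6 step1. rewrite_table XT i. destruct (Xrest ltac:(lia)) as [Hjr [-> Hrm]].
      destruct (Rle_dec _ _) as [Hc|Hc].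
      * do 2 step1. eapply solves_within_mono; [eapply (store_ok i hi bp fp r) with (jb := m bp)|lia].
        all: try eassumption. all: simp_mem; try solve_agree; try reflexivity; try lia.
        -- rewrite Hin by lia. ring.
        -- intros j Hj. destruct (le_lt_dec j hi).
           ++ rewrite Hin by lia. specialize (Hwm j ltac:(lia)). lra.
           ++ rewrite Hout by lia. specialize (Hrm j ltac:(lia)). lra.
      * do 3 step1.
        eapply solves_within_mono; [eapply (store_ok i hi bp fp r) with (jb := m regRestArg)|lia].
        all: try eassumption. all: simp_mem; try solve_agree; try reflexivity; try lia.
        -- rewrite Hout by lia. ring.
        -- intros j Hj. destruct (le_lt_dec j hi).
           ++ rewrite Hin by lia. specialize (Hwm j ltac:(lia)). lra.
           ++ rewrite Hout by lia. specialize (Hrm j ltac:(lia)). lra.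
  - assert (hi = i) as -> by lia.
    do 6 step1. rewrite_table XT i. destruct (Xrest ltac:(lia)) as [Hjr [-> Hrm]].
    do 2 step1. eapply solves_within_mono; [eapply (store_ok i i bp fp r) with (jb := m regRestArg)|lia].
    all: try eassumption. all: simp_mem; try solve_agree; try reflexivity; try lia.
    + rewrite Hout by lia. ring.
    + intros j Hj. rewrite Hout by lia. specialize (Hrm j ltac:(lia)). lra.
Qed.

Lemma pushed_ok i hi bp fp (r : nat -> R) (m : nat -> nat) :
  inv_pushed i hi bp fp r m ->
  ((0 < i)%nat -> forall hi bp fp r m, inv_loop (i - 1) hi bp fp r m ->
     solves_within (Config lblLoop r m) (budget_loop (i - 1) hi bp fp)) ->
  solves_within (Config lblHi r m) (100 * i + 8 * (fp - bp) + 19 * (hi - i) + 6 * n + 138).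
Proof.
  intros HI Hnext. pose proof HI as [Fr Tb Yrng Ydq0 Yrest Ybeyond Ydq].
  pose proof Tb as [Yinp YT YE YS YU Ysucc]. destruct Fr.
  replace (100 * i + 8 * (fp - bp) + 19 * (hi - i) + 6 * n + 138)%nat
    with ((100 * i + 8 * (fp - bp) + 6 * n + 131) + 19 * (hi - i) + 7)%nat by lia.
  eapply (hi_loop_ok i hi r m); auto; try lia;
    [ | apply agree_refl | apply agree_refl
      | intros j Hj; apply Ybeyond in Hj;
        pose proof (load_after_antitone n q i (S i) Hq ltac:(lia)); lra ].
  intros hi' r' m' Hhi' Agm Agr Hhi Hbeyond Hrest Hexit.
  replace (100 * i + 8 * (fp - bp) + 6 * n + 131 + 19 * (hi' - i))%nat
    with ((100 * i + 19 * (hi' - i) + 6 * n + 128) + 8 * (fp - bp) + 3)%nat by lia.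
  refine (back_loop_ok hi' fp bp r' m' _ _ _ _ _ _ (fp - bp) bp m' eq_refl _ _ _ _);
    [ auto | simp_mem; auto | simp_mem; auto | lia | | simp_mem; auto | apply agree_refl
    | lia | intros; lia ].
  intros bp' m'' Hbp' Agm' Hbp Hpass Hexit'.
  eapply solves_within_mono; [apply (choose_ok i hi' bp' fp r' m''); auto|lia].
  constructor; [constructor; simp_mem; try lia; reflexivity|constructor|..]; try lia.
  - intros x b o -> Hb Ho. simp_mem. apply Yinp; lia.
  - intros x j -> Hj. simp_mem. apply YT; lia.
  - intros x j -> Hj. simp_mem. apply YE; lia.
  - intros x j -> Hj. simp_mem.
    rewrite (succ_path_ext n m m'' (S i) Ysucc);
      [apply YS; lia | intros; unfold succ_base; simp_mem; auto | lia].
  - intros x j -> Hj. simp_mem. apply YU; lia.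
  - intros j Hj. unfold succ_base. simp_mem. apply Ysucc. lia.
  - simp_mem. apply (rest_min_ok_ext _ _ _ r); auto. intros j Hj. simp_mem. auto.
  - exact Hbeyond.
  - intros j Hj. destruct Hexit as [He|[He1 He2]]; [lia|].
    pose proof (load_after_antitone n q j hi' Hq ltac:(lia)). lra.
  - apply (deque_ok_ext _ _ _ _ r _ m).
    + intros a Ha. simp_mem. auto.
    + intros j Hj. simp_mem. auto.
    + eapply deque_ok_pop_front; [exact Ydq| lia | lia | |].
      * intros a Ha. specialize (Hpass a Ha). rewrite (Agm a) in Hpass by (unfold In; lia). auto.
      * destruct Hexit' as [E|[E1 E2]]; [left; auto|right; split; auto].
        rewrite (Agm bp') in E2 by (unfold In; lia). auto.
Qed.

Lemma push_done_ok i hi bp fp (r r1 r2 : nat -> R) (m m1 m2 : nat -> nat) uk fp' :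
  inv_loop i hi bp fp r m ->
  ((0 < i)%nat -> forall hi bp fp r m, inv_loop (i - 1) hi bp fp r m ->
     solves_within (Config lblLoop r m) (budget_loop (i - 1) hi bp fp)) ->
  agree r1 r [rAcc; rTmp; (baseE + S i)%nat; (baseU + S i)%nat] -> agree m1 m [regAddr] ->
  r1 (baseE + S i)%nat = dnext (S i) + dist_from (S (S i)) -> r1 (baseU + S i)%nat = uk ->
  uk = din (S i) - (dnext (S i) + dist_from (S (S i))) + r (baseS + S i)%nat ->
  m2 regFront = fp' -> agree m2 m1 [regFront; regAddr; regTop] -> agree r2 r1 [rAcc] ->
  (bp <= fp' <= fp)%nat ->
  (forall a, (fp' <= a < fp)%nat -> uk <= r1 (baseU + m1 a)%nat) ->
  (fp' = bp \/ ((bp < fp')%nat /\ r1 (baseU + m1 (fp' - 1))%nat < uk)) ->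
  solves_within (Config lblDoPush r2 m2) (100 * i + 19 * (hi - i) + 6 * n + 154 + 8 * (fp' - bp)).
Proof.
  intros HI Hnext Ar1 Am1 Er1E Er1U Huk Hfront Agm Agr Hfp Hpop Hex.
  pose proof HI as [Fr Tb Zrng Zdq0 Zrest Zbeyond Zdq].
  pose proof Tb as [Zinp ZT ZE ZS ZU Zsucc]. destruct Fr.
  do 5 step1. rewrite_table ZT (S i). rewrite_input Zinp (S i) 0%nat. do 3 step1.
  eapply solves_within_mono; [apply (pushed_ok i hi bp (S fp')); auto|lia].
  assert (Hdqm : forall a, (dqBase <= a)%nat -> m1 a = m a).
  { intros a Ha. rewrite Am1 by (unfold In; lia). auto. }
  assert (Hdqr : forall j, (S (S i) <= j <= n)%nat -> r1 (baseU + j)%nat = r (baseU + j)%nat).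
  { intros j Hj. rewrite Ar1 by (unfold In; lia). auto. }
  pose proof (load_after_S n q i ltac:(lia)) as HTS. pose proof (dist_from_S n dn (S i) ltac:(lia)) as HES.
  constructor; [constructor; simp_mem; try lia; reflexivity|constructor|..]; try lia.
  - intros x b o -> Hb Ho. simp_mem. apply Zinp; lia.
  - intros x j -> Hj. destruct (Nat.eq_dec j i) as [->|].
    + simp_mem. lra.
    + simp_mem. apply ZT; lia.
  - intros x j -> Hj. destruct (Nat.eq_dec j (S i)) as [->|].
    + simp_mem. lra.
    + simp_mem. apply ZE; lia.
  - intros x j -> Hj. simp_mem.
    rewrite (succ_path_ext n m _ (S i) Zsucc);
      [apply ZS; lia | intros; unfold succ_base; simp_mem; auto | lia].
  - intros x j -> Hj. destruct (Nat.eq_dec j (S i)) as [->|].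
    + simp_mem. rewrite Huk, HES. ring.
    + simp_mem. apply ZU; lia.
  - intros j Hj. unfold succ_base. simp_mem. apply Zsucc. lia.
  - simp_mem. apply (rest_min_ok_ext _ _ _ r); auto. intros j Hj. simp_mem. auto.
  - exact Zbeyond.
  - apply (deque_ok_push_back (S i) hi bp fp fp' r _ m _ uk Zdq ltac:(lia) ltac:(lia)).
    + intros a Ha. specialize (Hpop a Ha). rewrite Hdqm in Hpop by lia.
      pose proof (proj1 Zdq a ltac:(lia)). rewrite Hdqr in Hpop by lia. auto.
    + destruct Hex as [E|[E1 E2]]; [left; auto|right; split; auto].
      rewrite Hdqm in E2 by lia. pose proof (proj1 Zdq (fp' - 1)%nat ltac:(lia)).
      rewrite Hdqr in E2 by lia. auto.
    + simp_mem. auto.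
    + intros a Ha. simp_mem. auto.
    + simp_mem. auto.
    + intros j Hj. simp_mem. auto.
Qed.

Lemma loop_iteration_ok i hi bp fp (r : nat -> R) (m : nat -> nat) :
  inv_loop i hi bp fp r m ->
  ((0 < i)%nat -> forall hi bp fp r m, inv_loop (i - 1) hi bp fp r m ->
     solves_within (Config lblLoop r m) (budget_loop (i - 1) hi bp fp)) ->
  solves_within (Config lblLoop r m) (budget_loop i hi bp fp).
Proof.
  intros HI Hnext. pose proof HI as [Fr Tb Zrng Zdq0 Zrest Zbeyond Zdq].
  pose proof Tb as [Zinp ZT ZE ZS ZU Zsucc]. pose proof Fr as [].
  unfold budget_loop.
  do 2 step1. rewrite_input Zinp (S i) 1%nat. do 3 step1. rewrite_table ZE (S (S i)).
  do 5 step1. rewrite_input Zinp (S i) 3%nat.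
  do 6 step1.
  set (uk := din (S i) - (dnext (S i) + dist_from (S (S i))) + r (baseS + S i)%nat).
  match goal with |- solves_within (Config _ ?R ?M) _ => set (r1 := R); set (m1 := M) end.
  assert (Ar1 : agree r1 r [rAcc; rTmp; (baseE + S i)%nat; (baseU + S i)%nat]) by (subst r1; solve_agree).
  assert (Am1 : agree m1 m [regAddr]) by (subst m1; solve_agree).
  assert (Er1U : r1 (baseU + S i)%nat = uk) by (subst r1; simp_mem; auto).
  assert (Er1E : r1 (baseE + S i)%nat = dnext (S i) + dist_from (S (S i))) by (subst r1; simp_mem; auto).
  assert (Er1T : r1 rTmp = uk) by (subst r1; simp_mem; auto).
  clearbody r1 m1.
  eapply solves_within_mono;
    [refine (push_loop_ok bp fp r1 m1 uk (100 * i + 19 * (hi - i) + 6 * n + 154) _ _ fp r1 m1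
               _ _ _ _ _ _ _ _ _) | lia];
    [ | lia | simp_mem; auto | simp_mem; auto | simp_mem; auto | simp_mem; auto | auto
      | apply agree_refl | apply agree_refl | lia | intros; lia ].
  intros fp' r2 m2 Hfront _ _ _ _ Agm Agr Hfp Hpop Hex.
  eapply push_done_ok; eauto.
Qed.

Lemma loop_ok i hi bp fp r m : inv_loop i hi bp fp r m ->
  solves_within (Config lblLoop r m) (budget_loop i hi bp fp).
Proof.
  revert hi bp fp r m. induction i as [|i IH]; intros hi bp fp r m HI;
    apply loop_iteration_ok; auto; [lia|].
  intros _. replace (S i - 1)%nat with i by lia. auto.
Qed.

Lemma program_ok :
  solves_within (init_config n Qcap alpha q dn dout din) (23 + budget_loop (n - 1) n dqBase dqBase).
Proof.
  unfold init_config. do 23 step1.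
  eapply solves_within_mono; [apply (loop_ok (n - 1) n dqBase dqBase)|lia].
  constructor; [constructor; simp_mem; try lia; reflexivity|constructor|..]; try lia.
  - intros x b o -> Hb Ho. rewrite input_rm_block by lia. destruct o as [|[|[|[|o]]]]; auto; lia.
  - intros x j -> Hj. replace j with n by lia. rewrite input_rm_high, load_after_n by lia. auto.
  - intros x j -> Hj. replace j with (S n) by lia. rewrite input_rm_high, dist_from_Sn by lia. auto.
  - intros x j -> Hj. replace j with n by lia. rewrite input_rm_high, succ_path_n by lia.
    split; [reflexivity|apply path_lb_n].
  - intros j Hj. lia.
  - intros Hc. lia.
  - split; [|split]; intros; lia.
Qed.

End Algorithm.

Theorem mainTheorem4 :
  exists (prog : list instr) (C : nat),
  forall (n : nat) (Qcap alpha : R) (q dn dout din : nat -> R),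
    (1 <= n)%nat ->
    0 <= Qcap -> 0 <= alpha ->
    (forall i, (1 <= i <= n)%nat -> 0 <= q i) ->
    exists t : nat,
      (t <= C * n)%nat /\
      let fin := exec prog t (init_config n Qcap alpha q dn dout din) in
      step prog fin = None /\
      is_path n (out_path fin) /\
      out_cost fin = path_cost (arc_cost Qcap alpha q dn dout din) (out_path fin) /\
      (forall s, is_path n s ->
         path_cost (arc_cost Qcap alpha q dn dout din) (out_path fin)
         <= path_cost (arc_cost Qcap alpha q dn dout din) s).
Proof.
  exists prog, 230%nat. intros n Qcap alpha q dn dout din Hn _ _ Hq.
  destruct (program_ok n Qcap alpha q dn dout din Hn Hq) as [t [Ht Hrun]].
  exists t. split; [unfold budget_loop in Ht; lia | exact Hrun].
Qed.
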